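(* Under the setup in the context, let $H_n\equiv(n\hat\sigma_{2sls}^2)^{-1}(\hat\beta_{ols}-\hat\beta_{2sls})^\top(Y_1^\top M_{Z_1}Y_1)(\hat\beta_{ols}-\hat\beta_{2sls})$. Then \[ \hat\sigma_u^2=\hat\sigma_{ols}^2\Big(1-\frac{t_{H_1}}{n}\Big)=\hat\sigma_{2sls}^2\Big(1-\frac{t_{H_2}}{n}-H_n\Big). \]
   Context: Data: $Y_1$ is an $n\times k_1$ matrix, $Y_2$ an $n\times 1$ vector, $Z_1$ an $n\times p_1$ matrix, $Z_2$ an $n\times p_2$ matrix, all real; $Z\equiv(Z_1,Z_2)$ and $X\equiv(Y_1,Z_1)$. For a matrix $A$ with $A^\top A$ nonsingular, $P_A\equiv A(A^\top A)^{-1}A^\top$ and $M_A\equiv I_n-P_A$. Standing assumptions: $Z^\top Z$, $X^\top X$, $X^\top P_Z X$ and $(X,\hat V)^\top(X,\hat V)$ are nonsingular, where $\hat V\equiv M_Z Y_1$. Define $\hat Y_1\equiv P_Z Y_1$, $\hat\theta_{ols}\equiv(X^\top X)^{-1}X^\top Y_2$, $\hat\theta_{2sls}\equiv(X^\top P_ZX)^{-1}X^\top P_Z Y_2$, and let $\hat\beta_{ols},\hat\beta_{2sls}$ be the leading $k_1\times1$ subvectors of $\hat\theta_{ols},\hat\theta_{2sls}$. Define $(\hat\theta_{cf}^\top,\hat\rho_{cf}^\top)^\top\equiv((X,\hat V)^\top(X,\hat V))^{-1}(X,\hat V)^\top Y_2$, $\hat\sigma_u^2\equiv n^{-1}\|Y_2-X\hat\theta_{cf}-\hat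 V\hat\rho_{cf}\|^2$, $\hat\sigma_{ols}^2\equiv n^{-1}\|Y_2-X\hat\theta_{ols}\|^2$, $\hat\sigma_{2sls}^2\equiv n^{-1}\|Y_2-X\hat\theta_{2sls}\|^2$; these three are assumed strictly positive. For scalars $s_1^2,s_2^2>0$ such that the matrix below is nonsingular, $t_{H,n}(s_1^2,s_2^2)\equiv(\hat\beta_{ols}-\hat\beta_{2sls})^\top\big(s_1^2(\hat Y_1^\top M_{Z_1}\hat Y_1)^{-1}-s_2^2(Y_1^\top M_{Z_1}Y_1)^{-1}\big)^{-1}(\hat\beta_{ols}-\hat\beta_{2sls})$, and $t_{H_1}\equiv t_{H,n}(\hat\sigma_{ols}^2,\hat\sigma_{ols}^2)$, $t_{H_2}\equiv t_{H,n}(\hat\sigma_{2sls}^2,\hat\sigma_{2sls}^2)$. *)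

From HB Require Import structures.
From mathcomp Require Import all_boot all_order all_algebra.
Set Implicit Arguments. Unset Strict Implicit. Unset Printing Implicit Defensive.
Import Order.TTheory GRing.Theory Num.Theory.
Local Open Scope ring_scope.

Section Defs.
Variable R : realFieldType.

Definition projmx n m (A : 'M[R]_(n, m)) : 'M[R]_n :=
  A *m invmx (A^T *m A) *m A^T.
Definition annmx n m (A : 'M[R]_(n, m)) : 'M[R]_n := 1%:M - projmx A.

Definition sqnorm n (v : 'cV[R]_n) : R := \sum_(i < n) (v i 0) ^+ 2.

Variables (n k1 p1 p2 : nat).
Variables (Y1 : 'M[R]_(n, k1)) (Y2 : 'cV[R]_n)
          (Z1 : 'M[R]_(n, p1)) (Z2 : 'M[R]_(n, p2)).

Definition Zmat : 'M[R]_(n, p1 + p2) := row_mx Z1 Z2.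
Definition Xmat : 'M[R]_(n, k1 + p1) := row_mx Y1 Z1.
Definition Vhat : 'M[R]_(n, k1) := annmx Zmat *m Y1.
Definition Y1hat : 'M[R]_(n, k1) := projmx Zmat *m Y1.

Definition theta_ols : 'cV[R]_(k1 + p1) :=
  invmx (Xmat^T *m Xmat) *m Xmat^T *m Y2.
Definition theta_2sls : 'cV[R]_(k1 + p1) :=
  invmx (Xmat^T *m projmx Zmat *m Xmat) *m Xmat^T *m projmx Zmat *m Y2.
Definition beta_ols : 'cV[R]_k1 := usubmx theta_ols.
Definition beta_2sls : 'cV[R]_k1 := usubmx theta_2sls.

Definition XV : 'M[R]_(n, (k1 + p1) + k1) := row_mx Xmat Vhat.
Definition coef_cf : 'cV[R]_((k1 + p1) + k1) := invmx (XV^T *m XV) *m XV^T *m Y2.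
Definition theta_cf : 'cV[R]_(k1 + p1) := usubmx coef_cf.
Definition rho_cf : 'cV[R]_k1 := dsubmx coef_cf.

Definition sigma2_u : R :=
  (n%:R)^-1 * sqnorm (Y2 - Xmat *m theta_cf - Vhat *m rho_cf).
Definition sigma2_ols : R := (n%:R)^-1 * sqnorm (Y2 - Xmat *m theta_ols).
Definition sigma2_2sls : R := (n%:R)^-1 * sqnorm (Y2 - Xmat *m theta_2sls).

Definition tH_mid (s1 s2 : R) : 'M[R]_k1 :=
  s1 *: invmx (Y1hat^T *m annmx Z1 *m Y1hat) - s2 *: invmx (Y1^T *m annmx Z1 *m Y1).

Definition tH (s1 s2 : R) : R :=
  ((beta_ols - beta_2sls)^T *m invmx (tH_mid s1 s2) *m (beta_ols - beta_2sls)) 0 0.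

Definition tH1 : R := tH sigma2_ols sigma2_ols.
Definition tH2 : R := tH sigma2_2sls sigma2_2sls.

Definition Hn : R :=
  (n%:R * sigma2_2sls)^-1 *
  ((beta_ols - beta_2sls)^T *m (Y1^T *m annmx Z1 *m Y1) *m (beta_ols - beta_2sls)) 0 0.

End Defs.

From mathcomp Require Import all_boot all_order all_algebra.
From mathcomp Require Import ring.
Import Order.TTheory GRing.Theory Num.Theory.
Set Implicit Arguments. Unset Strict Implicit. Unset Printing Implicit Defensive.
Local Open Scope ring_scope.

(* Write e_ols, e_2sls, e_cf for the three residual vectors, W := M_Z1 Y1,
   d := beta_ols - beta_2sls, A := Yhat1' M_Z1 Yhat1, B := Y1' M_Z1 Y1 and
   C := Vhat' Vhat = Y1' M_Z Y1, so that B = A + C.  The control-function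
   estimate of theta coincides with 2SLS, and by Frisch-Waugh
   e_2sls = e_ols + W d with W'e_ols = 0, whence
   |e_2sls|^2 = |e_ols|^2 + d'B d.  Likewise e_ols = e_cf + (Vhat rho - W d)
   with e_cf orthogonal to both Vhat and W; the normal equations give
   C rho = B d, so |e_ols|^2 = |e_cf|^2 + d' B C^-1 A d.  Finally
   (A^-1 - B^-1)^-1 = B C^-1 A, which turns both Hausman statistics into the
   quadratic form d' B C^-1 A d, and the identities are then arithmetic. *)

Section Gram.
Variable R : realFieldType.

Lemma sqnormE m (v : 'cV[R]_m) : sqnorm v = (v^T *m v) 0 0.
Proof. by rewrite /sqnorm mxE; apply: eq_bigr => i _; rewrite !mxE expr2. Qed.

Lemma sqnorm_eq0 m (v : 'cV[R]_m) : sqnorm v = 0 -> v = 0.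
Proof.
move=> v0; apply/matrixP => i j; rewrite ord1 mxE.
by apply/eqP; rewrite -sqrf_eq0; apply/eqP/(psumr_eq0P _ v0) => // l _; rewrite sqr_ge0.
Qed.

Lemma trmx_mul_eq0 m k (a : 'M[R]_(m, k)) (b : 'cV[R]_m) :
  a^T *m b = 0 -> b^T *m a = 0.
Proof. by move=> ab0; rewrite -[b^T *m a]trmxK trmx_mul trmxK ab0 trmx0. Qed.

Lemma sqnormD_orth m (a b : 'cV[R]_m) :
  a^T *m b = 0 -> sqnorm (a + b) = sqnorm a + sqnorm b.
Proof.
move=> ab0; rewrite !sqnormE [(a + b)^T]linearD /= mulmxDl !mulmxDr.
by rewrite ab0 (trmx_mul_eq0 ab0) addr0 add0r mxE.
Qed.

Lemma gram_unitmx m k (G : 'M[R]_(m, k)) :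
  (forall w : 'cV[R]_k, G *m w = 0 -> w = 0) -> G^T *m G \in unitmx.
Proof.
move=> G_inj; rewrite -row_free_unit; apply: inj_row_free => v vGG0.
have /sqnorm_eq0/G_inj/(congr1 trmx) : sqnorm (G *m v^T) = 0.
  by rewrite sqnormE trmx_mul trmxK !mulmxA -(mulmxA v) vGG0 !mul0mx mxE.
by rewrite trmxK trmx0.
Qed.

Lemma gram_unitmx_inj m k (G : 'M[R]_(m, k)) (w : 'cV[R]_k) :
  G^T *m G \in unitmx -> G *m w = 0 -> w = 0.
Proof. by move=> GG Gw0; rewrite -(mulKmx GG w) -mulmxA Gw0 !mulmx0. Qed.

Lemma invmx_eq_rinv k (A B : 'M[R]_k) : A *m B = 1%:M -> invmx A = B.
Proof.
move=> AB1; have [uA _] := mulmx1_unit AB1.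
by rewrite -[invmx A]mulmx1 -AB1 mulmxA mulVmx // mul1mx.
Qed.

Lemma sub_invmx_rinv k (A B : 'M[R]_k) :
  A \in unitmx -> B \in unitmx -> B - A \in unitmx ->
  (invmx A - invmx B) *m (B *m invmx (B - A) *m A) = 1%:M.
Proof.
move=> uA uB uBA.
have -> : invmx A - invmx B = invmx A *m (B - A) *m invmx B.
  by rewrite mulmxBr mulmxBl mulVmx // mul1mx -mulmxA mulmxV // mulmx1.
by rewrite !mulmxA (mulmxKV uB) (mulmxK uBA) mulVmx.
Qed.

Lemma wls_normal_eq m k (X : 'M[R]_(m, k)) (Q : 'M[R]_m) (y : 'cV[R]_m) :
  X^T *m Q *m X \in unitmx ->
  X^T *m Q *m (y - X *m (invmx (X^T *m Q *m X) *m X^T *m Q *m y)) = 0.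
Proof.
move=> uXQX; have -> : invmx (X^T *m Q *m X) *m X^T *m Q *m y
    = invmx (X^T *m Q *m X) *m (X^T *m Q *m y) by rewrite !mulmxA.
by rewrite mulmxBr (mulmxA _ X) mulKVmx // subrr.
Qed.

Lemma wls_normal_eq_uniq m k (X : 'M[R]_(m, k)) (Q : 'M[R]_m) (y : 'cV[R]_m)
    (t : 'cV[R]_k) :
  X^T *m Q *m X \in unitmx -> X^T *m Q *m (y - X *m t) = 0 ->
  t = invmx (X^T *m Q *m X) *m X^T *m Q *m y.
Proof.
move=> uXQX; rewrite mulmxBr (mulmxA _ X) => /eqP; rewrite subr_eq0 => /eqP XQy.
have -> : invmx (X^T *m Q *m X) *m X^T *m Q *m y
    = invmx (X^T *m Q *m X) *m (X^T *m Q *m y) by rewrite !mulmxA.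
by rewrite XQy mulKmx.
Qed.

Lemma sqnorm_gram_residual m k (V W : 'M[R]_(m, k)) (rho d : 'cV[R]_k) :
  V^T *m V \in unitmx -> W^T *m V = V^T *m V ->
  W^T *m (V *m rho - W *m d) = 0 ->
  sqnorm (V *m rho - W *m d) =
    (d^T *m (W^T *m W *m invmx (V^T *m V) *m (W^T *m W - V^T *m V)) *m d) 0 0.
Proof.
set C := V^T *m V; set B := W^T *m W; set f := V *m rho - W *m d => uC WV Wf.
have Crho : C *m rho = B *m d.
  by move: Wf; rewrite mulmxBr !mulmxA WV => /eqP; rewrite subr_eq0 => /eqP.
have Vf : V^T *m f = (B - C) *m d.
  rewrite mulmxBr !mulmxA -/C -[V^T *m W]trmxK trmx_mul trmxK WV.
  by rewrite [C^T]trmx_mul trmxK -/C Crho mulmxBl.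
have rhoE : rho = invmx C *m B *m d by rewrite -mulmxA -Crho mulKmx.
rewrite sqnormE [f^T]linearB /= mulmxBl !trmx_mul -!mulmxA Wf Vf mulmx0 subr0 rhoE.
by rewrite !trmx_mul trmx_inv !trmx_mul !trmxK !mulmxA.
Qed.

End Gram.

Section Projections.
Variable R : realFieldType.

Lemma trmx_projmx n m (G : 'M[R]_(n, m)) : (projmx G)^T = projmx G.
Proof. by rewrite /projmx !trmx_mul trmx_inv trmx_mul trmxK mulmxA. Qed.

Lemma trmx_annmx n m (G : 'M[R]_(n, m)) : (annmx G)^T = annmx G.
Proof. by rewrite /annmx linearB /= trmx1 trmx_projmx. Qed.

Lemma gram_sym_idem n k (E : 'M[R]_n) (A : 'M[R]_(n, k)) :
  E^T = E -> E *m E = E -> (E *m A)^T *m (E *m A) = A^T *m E *m A.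
Proof. by move=> Et EE; rewrite trmx_mul Et !mulmxA -(mulmxA _ E E) EE. Qed.

Variables (n m : nat) (G : 'M[R]_(n, m)).
Hypothesis uG : G^T *m G \in unitmx.

Lemma projmx_mulmx : projmx G *m G = G.
Proof. by rewrite /projmx -!mulmxA mulVmx // mulmx1. Qed.

Lemma annmx_mulmx : annmx G *m G = 0.
Proof. by rewrite /annmx mulmxBl mul1mx projmx_mulmx subrr. Qed.

Lemma projmx_idem : projmx G *m projmx G = projmx G.
Proof. by rewrite {1}/projmx !mulmxA projmx_mulmx. Qed.

Lemma annmx_idem : annmx G *m annmx G = annmx G.
Proof.
by rewrite /annmx mulmxBl mul1mx mulmxBr mulmx1 projmx_idem subrr subr0.
Qed.

Lemma projmx_annmx : projmx G *m annmx G = 0.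
Proof. by rewrite /annmx mulmxBr mulmx1 projmx_idem subrr. Qed.

Lemma gram_projmx k (A : 'M[R]_(n, k)) :
  (projmx G *m A)^T *m (projmx G *m A) = A^T *m projmx G *m A.
Proof. exact: gram_sym_idem (trmx_projmx G) projmx_idem. Qed.

Lemma gram_annmx k (A : 'M[R]_(n, k)) :
  (annmx G *m A)^T *m (annmx G *m A) = A^T *m annmx G *m A.
Proof. exact: gram_sym_idem (trmx_annmx G) annmx_idem. Qed.

Lemma ls_normal_eq (y : 'cV[R]_n) :
  G^T *m (y - G *m (invmx (G^T *m G) *m G^T *m y)) = 0.
Proof. by rewrite mulmxBr !mulmxA mulmxV // mul1mx subrr. Qed.

Variables (p : nat) (H : 'M[R]_(n, p)).
Hypothesis PGH : projmx G *m H = H.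

Lemma projmx_mul_nested : projmx G *m projmx H = projmx H.
Proof. by rewrite {2}/projmx !mulmxA PGH. Qed.

Lemma projmx_nested_mul : projmx H *m projmx G = projmx H.
Proof.
by rewrite -(trmx_projmx H) -(trmx_projmx G) -trmx_mul projmx_mul_nested.
Qed.

Lemma annmx_nested_mul : annmx H *m annmx G = annmx G.
Proof.
by rewrite /annmx mulmxBl mul1mx mulmxBr mulmx1 projmx_nested_mul subrr subr0.
Qed.

Lemma projmx_annmx_nested : projmx G *m annmx H *m projmx G = projmx G - projmx H.
Proof.
by rewrite /annmx mulmxBr mulmx1 mulmxBl projmx_idem projmx_mul_nested projmx_nested_mul.
Qed.

End Projections.

Section PartitionedRegression.
Variables (R : realFieldType) (n a b : nat) (A : 'M[R]_(n, a)) (B : 'M[R]_(n, b)).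

Lemma tr_row_mx_mul_eq0 (e : 'cV[R]_n) :
  (row_mx A B)^T *m e = 0 -> A^T *m e = 0 /\ B^T *m e = 0.
Proof.
by rewrite tr_row_mx mul_col_mx => /eqP; rewrite col_mx_eq0 => /andP[/eqP-> /eqP->].
Qed.

Lemma annmx_mul_orth (e : 'cV[R]_n) :
  (row_mx A B)^T *m e = 0 -> (annmx B *m A)^T *m e = 0.
Proof.
move=> /tr_row_mx_mul_eq0[Ae Be].
rewrite trmx_mul trmx_annmx -mulmxA /annmx mulmxBl mul1mx /projmx -!mulmxA.
by rewrite Be !mulmx0 subr0.
Qed.

Lemma row_mx_mul_annmx (delta : 'cV[R]_(a + b)) :
  B^T *m B \in unitmx -> B^T *m (row_mx A B *m delta) = 0 ->
  row_mx A B *m delta = annmx B *m A *m usubmx delta.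
Proof.
move=> uB Bd0.
rewrite -[LHS]mul1mx -[1%:M](subrK (projmx B)) -/(annmx B) mulmxDl.
rewrite /projmx -mulmxA Bd0 mulmx0 addr0 -{1}(vsubmxK delta) mul_row_col.
by rewrite mulmxDr !mulmxA annmx_mulmx // mul0mx addr0.
Qed.

Hypothesis uAB : (row_mx A B)^T *m row_mx A B \in unitmx.

Lemma gram_row_mx_unitr : B^T *m B \in unitmx.
Proof.
apply: gram_unitmx => w Bw0.
have : row_mx A B *m col_mx 0 w = 0 by rewrite mul_row_col mulmx0 add0r.
by move/(gram_unitmx_inj uAB)/eqP; rewrite col_mx_eq0 => /andP[_ /eqP].
Qed.

Lemma gram_annmx_unitmx : (annmx B *m A)^T *m (annmx B *m A) \in unitmx.
Proof.
apply: gram_unitmx => w MAw0.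
have : row_mx A B *m col_mx w (- (invmx (B^T *m B) *m B^T *m A *m w)) = 0.
  by rewrite -MAw0 mul_row_col mulmxN /annmx mulmxBl mul1mx mulmxBl /projmx !mulmxA.
by move/(gram_unitmx_inj uAB)/eqP; rewrite col_mx_eq0 => /andP[/eqP].
Qed.

End PartitionedRegression.

Section ControlFunction.
Variables (R : realFieldType) (n k1 p1 p2 : nat) (Y1 : 'M[R]_(n, k1))
  (Y2 : 'cV[R]_n) (Z1 : 'M[R]_(n, p1)) (Z2 : 'M[R]_(n, p2)).
Local Notation Z := (Zmat Z1 Z2).
Local Notation X := (Xmat Y1 Z1).
Local Notation V := (Vhat Y1 Z1 Z2).
Local Notation Yh := (Y1hat Y1 Z1 Z2).
Local Notation P := (projmx Z).
Local Notation M := (annmx Z).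
Local Notation P1 := (projmx Z1).
Local Notation M1 := (annmx Z1).
Local Notation W := (M1 *m Y1).
Local Notation A := (Yh^T *m M1 *m Yh).
Local Notation B := (Y1^T *m M1 *m Y1).
Local Notation C := (Y1^T *m M *m Y1).
Local Notation e_ols := (Y2 - X *m theta_ols Y1 Y2 Z1).
Local Notation e_2sls := (Y2 - X *m theta_2sls Y1 Y2 Z1 Z2).
Local Notation e_cf := (Y2 - X *m theta_cf Y1 Y2 Z1 Z2 - V *m rho_cf Y1 Y2 Z1 Z2).
Local Notation d := (beta_ols Y1 Y2 Z1 - beta_2sls Y1 Y2 Z1 Z2).

Hypotheses (uZ : Z^T *m Z \in unitmx) (uX : X^T *m X \in unitmx)
  (uXPX : X^T *m P *m X \in unitmx) (uXV : (XV Y1 Z1 Z2)^T *m XV Y1 Z1 Z2 \in unitmx).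

Lemma gram_Z1_unitmx : Z1^T *m Z1 \in unitmx.
Proof. exact: gram_row_mx_unitr uX. Qed.

Lemma projmx_Z_Z1 : P *m Z1 = Z1.
Proof. by have := projmx_mulmx uZ; rewrite {2 3}/Zmat mul_mx_row => /eq_row_mx[]. Qed.

Lemma annmx_Z_Z1 : M *m Z1 = 0.
Proof. by rewrite /annmx mulmxBl mul1mx projmx_Z_Z1 subrr. Qed.

Lemma projmx_Z_X : P *m X = row_mx Yh Z1.
Proof. by rewrite /Xmat mul_mx_row projmx_Z_Z1. Qed.

Lemma A_eq_B_sub_C : A = B - C.
Proof.
have -> : A = Y1^T *m (P *m M1 *m P) *m Y1.
  by rewrite /Y1hat trmx_mul trmx_projmx !mulmxA.
rewrite projmx_annmx_nested ?projmx_Z_Z1 // -mulmxBl -mulmxBr.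
by rewrite /annmx opprB [in RHS]addrC addrA subrK.
Qed.

Lemma unitmx_B : B \in unitmx.
Proof. by rewrite -gram_annmx ?gram_Z1_unitmx //; apply: gram_annmx_unitmx. Qed.

Lemma unitmx_A : A \in unitmx.
Proof.
rewrite -gram_annmx ?gram_Z1_unitmx //; apply: gram_annmx_unitmx.
by rewrite -projmx_Z_X gram_projmx.
Qed.

Lemma unitmx_C : C \in unitmx.
Proof. by rewrite -gram_annmx //; apply: gram_row_mx_unitr uXV. Qed.

Lemma cf_normal_eq : X^T *m e_cf = 0 /\ V^T *m e_cf = 0.
Proof.
apply: tr_row_mx_mul_eq0; rewrite -/(XV Y1 Z1 Z2).
have -> : e_cf = Y2 - XV Y1 Z1 Z2 *m coef_cf Y1 Y2 Z1 Z2.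
  by rewrite -(vsubmxK (coef_cf _ _ _ _)) /XV mul_row_col opprD addrA.
exact: ls_normal_eq.
Qed.

Lemma theta_cf_2sls : theta_cf Y1 Y2 Z1 Z2 = theta_2sls Y1 Y2 Z1 Z2.
Proof.
have [Xe Ve] := cf_normal_eq.
have PV : P *m V = 0 by rewrite /Vhat mulmxA projmx_annmx // mul0mx.
have MX : M *m X = row_mx V 0.
  by rewrite /Xmat mul_mx_row annmx_Z_Z1.
have XPe : X^T *m P *m e_cf = 0.
  have -> : P = 1%:M - M by rewrite /annmx opprB addrC subrK.
  rewrite (mulmxBr X^T) mulmx1 mulmxBl Xe -(trmx_annmx Z) -trmx_mul MX tr_row_mx.
  by rewrite mul_col_mx Ve trmx0 mul0mx col_mx0 subrr.
apply: wls_normal_eq_uniq uXPX _.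
rewrite -[_ - X *m _](subrK (V *m rho_cf Y1 Y2 Z1 Z2)) mulmxDr XPe -mulmxA.
by rewrite (mulmxA P) PV mul0mx mulmx0 add0r.
Qed.

Lemma resid_2sls_ols : e_2sls = e_ols + W *m d.
Proof.
set delta := theta_ols Y1 Y2 Z1 - theta_2sls Y1 Y2 Z1 Z2.
have resid : e_2sls = e_ols + X *m delta by rewrite mulmxBr addrA subrK.
have [_ Z1e_ols] := tr_row_mx_mul_eq0 (ls_normal_eq uX Y2).
have [_ Z1Pe_2sls] : Y1^T *m (P *m e_2sls) = 0 /\ Z1^T *m (P *m e_2sls) = 0.
  by apply: tr_row_mx_mul_eq0; rewrite mulmxA; apply: wls_normal_eq.
have Z1P : Z1^T *m P = Z1^T by rewrite -(trmx_projmx Z) -trmx_mul projmx_Z_Z1.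
have Z1Xdelta : Z1^T *m (X *m delta) = 0.
  have -> : X *m delta = e_2sls - e_ols by rewrite resid [e_ols + _]addrC addrK.
  by rewrite mulmxBr -{1}Z1P -mulmxA Z1Pe_2sls Z1e_ols subrr.
rewrite resid (row_mx_mul_annmx gram_Z1_unitmx Z1Xdelta).
by rewrite /delta linearB.
Qed.

Lemma sqnorm_resid_2sls : sqnorm e_2sls = sqnorm e_ols + (d^T *m B *m d) 0 0.
Proof.
have We_ols : W^T *m e_ols = 0 by apply: annmx_mul_orth; apply: ls_normal_eq.
rewrite resid_2sls_ols sqnormD_orth; last by rewrite mulmxA (trmx_mul_eq0 We_ols) mul0mx.
by rewrite [sqnorm (W *m d)]sqnormE -gram_annmx ?gram_Z1_unitmx // trmx_mul !mulmxA.
Qed.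

Lemma sqnorm_resid_ols :
  sqnorm e_ols = sqnorm e_cf + (d^T *m (B *m invmx C *m A) *m d) 0 0.
Proof.
have [Xe_cf Ve_cf] := cf_normal_eq.
have We_cf : W^T *m e_cf = 0 := annmx_mul_orth Xe_cf.
have We_ols : W^T *m e_ols = 0 := annmx_mul_orth (ls_normal_eq uX Y2).
set f := V *m rho_cf Y1 Y2 Z1 Z2 - W *m d.
have resid : e_ols = e_cf + f.
  by rewrite theta_cf_2sls resid_2sls_ols addrA subrK addrK.
have Wf : W^T *m f = 0.
  have -> : f = e_ols - e_cf by rewrite resid addrC addKr.
  by rewrite mulmxBr We_ols We_cf subrr.
have VV : V^T *m V = C by rewrite gram_annmx.
have WV : W^T *m V = V^T *m V.
  rewrite /Vhat !gram_annmx // trmx_mul trmx_annmx -!mulmxA (mulmxA M1).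
  by rewrite annmx_nested_mul ?projmx_Z_Z1.
rewrite resid sqnormD_orth; last first.
  rewrite /f mulmxBr (mulmxA _ V) (mulmxA _ W).
  by rewrite (trmx_mul_eq0 Ve_cf) (trmx_mul_eq0 We_cf) !mul0mx subrr.
have uVV : V^T *m V \in unitmx by rewrite VV unitmx_C.
by rewrite (sqnorm_gram_residual uVV WV Wf) VV gram_annmx ?gram_Z1_unitmx // A_eq_B_sub_C.
Qed.

Lemma invmx_tH_mid (s : R) :
  s != 0 -> invmx (tH_mid Y1 Z1 Z2 s s) = s^-1 *: (B *m invmx C *m A).
Proof.
move=> s0; apply: invmx_eq_rinv; rewrite /tH_mid -scalerBr -scalemxAl -scalemxAr.
have BA : B - A = C by rewrite A_eq_B_sub_C opprB addrC subrK.
by rewrite scalerA mulfV // scale1r -{1}BA sub_invmx_rinv ?BA ?unitmx_A ?unitmx_B ?unitmx_C.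
Qed.

End ControlFunction.

Theorem lemma2 (R : realFieldType) (n k1 p1 p2 : nat)
  (Y1 : 'M[R]_(n, k1)) (Y2 : 'cV[R]_n) (Z1 : 'M[R]_(n, p1)) (Z2 : 'M[R]_(n, p2)) :
  let Z := Zmat Z1 Z2 in
  let X := Xmat Y1 Z1 in
  (Z^T *m Z) \in unitmx ->
  (X^T *m X) \in unitmx ->
  (X^T *m projmx Z *m X) \in unitmx ->
  ((XV Y1 Z1 Z2)^T *m XV Y1 Z1 Z2) \in unitmx ->
  0 < sigma2_u Y1 Y2 Z1 Z2 ->
  0 < sigma2_ols Y1 Y2 Z1 ->
  0 < sigma2_2sls Y1 Y2 Z1 Z2 ->
  tH_mid Y1 Z1 Z2 (sigma2_ols Y1 Y2 Z1) (sigma2_ols Y1 Y2 Z1) \in unitmx ->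
  tH_mid Y1 Z1 Z2 (sigma2_2sls Y1 Y2 Z1 Z2) (sigma2_2sls Y1 Y2 Z1 Z2) \in unitmx ->
  sigma2_u Y1 Y2 Z1 Z2 = sigma2_ols Y1 Y2 Z1 * (1 - tH1 Y1 Y2 Z1 Z2 / n%:R) /\
  sigma2_u Y1 Y2 Z1 Z2 =
    sigma2_2sls Y1 Y2 Z1 Z2 * (1 - tH2 Y1 Y2 Z1 Z2 / n%:R - Hn Y1 Y2 Z1 Z2).
Proof.
move=> Z X uZ uX uXPX uXV _ s_ols s_2sls _ _.
have n0 : n%:R != 0 :> R.
  by apply: contraTneq s_ols => n0; rewrite /sigma2_ols n0 invr0 mul0r ltxx.
rewrite /tH1 /tH2 /tH /Hn !(invmx_tH_mid uZ uX uXPX uXV) ?gt_eqF //.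
rewrite -!scalemxAr -!scalemxAl ![(_ *: _ : 'M[R]_1) 0 0]mxE.
move: s_ols s_2sls; rewrite /sigma2_u /sigma2_ols /sigma2_2sls.
rewrite (sqnorm_resid_2sls Y2 uZ uX uXPX) (sqnorm_resid_ols Y2 uZ uX uXPX uXV).
set u := sqnorm _; set q := (_ *m _) 0 0; set D := (_ *m _) 0 0 => s_ols s_2sls.
have pos_neq0 (x : R) : 0 < n%:R^-1 * x -> x != 0.
  by apply: contraTneq => ->; rewrite mulr0 ltxx.
by split; field; rewrite n0 pos_neq0.
Qed.
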